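(* Let $g \ge 2$, $n \ge 2$, let $(t_1,\ldots,t_n)$ be a generic $n$-tuple of elements of $T$, let $l$ and $q$ be distinct elements of $\{1,\ldots,n\}$, and let $(i,j,k)$ be a permutation of $(1,2,3)$. An element $[\rho] \in S_g(t_1,\ldots,t_n)$ lies in the common vanishing locus of $s^l_{i,j}(c_q)$ and $s^l_{i,k}(c_q)$ if and only if it lies in the common vanishing locus of $s^l_{j,i}(c_q)$ and $s^l_{k,i}(c_q)$.
   Context: Let $\Sigma$ be a compact Riemann surface of genus $g$, $p_1,\ldots,p_n\in\Sigma$ distinct points, and fix the presentation $\pi_1(\Sigma\setminus\{p_1,\ldots,p_n\}) = \langle a_1,\ldots,a_g,b_1,\ldots,b_g,c_1,\ldots,c_n \mid \prod_{i=1}^g[a_i,b_i]=\prod_{j=1}^n c_j\rangle$. Let $G=SU(3)$, $T\subset G$ the diagonal maximal torus. An $n$-tuple $(t_1,\ldots,t_n)$ in $T$ is generic if each $t_j$ has centralizer $T$ in $G$ (distinct eigenvalues) and no product $\lambda_1\cdots\lambda_n$ with $\lambda_i$ an eigenvalue of $t_i$ equals $1$. Let $S_g(t_1,\ldots,t_n) := \{\rho\in\mathrm{Hom}(\pi_1(\Sigma\setminus\{p_1,\ldots,p_n\}),G) \mid \rho(c_i)\sim t_i\ \forall i\}/G$ (conjugation quotient; $\sim$ is conjugacy in $G$), and $V^l_g(t_1,\ldots,t_n) := \{\rho \mid \rho(c_l)=t_l,\ \rho(c_i)\sim t_i\ \forall i\}$, a $T$-bundle over $S_g(t_1,\ldots,t_n)$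 under conjugation; every class $[\rho]$ has a representative in $V^l_g(t_1,\ldots,t_n)$. For $1\le j\le 3$ let $\mathbb{C}_{(j)}$ be the representation of $T$ where $\mathrm{diag}(e^{i\theta_1},e^{i\theta_2},e^{i\theta_3})$ acts by $e^{i\theta_j}$, and $L^l_j := (V^l_g(t_1,\ldots,t_n)\times\mathbb{C}_{(j)})/T$. For $l\in\{1,\ldots,n\}$, $1\le j,k\le 3$ and $i'\in\{1,\ldots,n\}\setminus\{l\}$, the paper defines a section $s^l_{j,k}(c_{i'})$ of $L^l_j$ as follows: for a representative $\rho\in V^l_g(t_1,\ldots,t_n)$ choose $A\in SU(3)$ with $A\rho(c_{i'})A^{-1}=t_{i'}$ (unique up to left multiplication by $T$), and the section takes the value determined by the matrix entry $A_{jk}$. Its zero locus is the set of $[\rho]$ such that, for a representative $\rho\in V^l_g(t_1,\ldots,t_n)$ and such $A$, $A_{jk}=0$; equivalently, the $k$-th coordinate of an eigenvector of $\rho(c_{i'})$ with eigenvalue $(t_{i'})_{jj}$ is zero. *)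

From mathcomp Require Import all_boot all_algebra.
From mathcomp Require Import complex Rstruct.
Set Implicit Arguments. Unset Strict Implicit. Unset Printing Implicit Defensive.
Import GRing.Theory.
Local Open Scope ring_scope.

Definition CC := (Rdefinitions.R)[i].
Definition M3 := 'M[CC]_3.

Definition adjm (A : M3) : M3 := (map_mx (@conjc _) A)^T.

Definition isSU3 (A : M3) : Prop := A *m adjm A = 1%:M /\ \det A = 1.

Definition in_torus (A : M3) : Prop :=
  isSU3 A /\ forall a b : 'I_3, a != b -> A a b = 0.

Definition conjG (x y : M3) : Prop :=
  exists B, isSU3 B /\ B *m x *m invmx B = y.

Definition centralizer_is_T (t : M3) : Prop :=
  forall B, isSU3 B -> (B *m t = t *m B <-> in_torus B).

Definition generic n (t : 'I_n -> M3) : Prop :=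
  (forall i, centralizer_is_T (t i)) /\
  (forall lam : 'I_n -> CC, (forall i, eigenvalue (t i) (lam i)) ->
      \prod_(i < n) lam i != 1).

(* an element of Hom(pi_1(Sigma \ {p_1..p_n}), G) is determined by the images
   of the generators a_1..a_g, b_1..b_g, c_1..c_n *)
Record rep (g n : nat) := Rep {
  ra : 'I_g -> M3; rb : 'I_g -> M3; rc : 'I_n -> M3 }.

Definition is_hom g n (r : rep g n) : Prop :=
  (forall i, isSU3 (ra r i)) /\ (forall i, isSU3 (rb r i)) /\
  (forall j, isSU3 (rc r j)) /\
  \prod_(i < g) (ra r i * rb r i * invmx (ra r i) * invmx (rb r i))
    = \prod_(j < n) rc r j.

Definition conj_rep g n (B : M3) (r : rep g n) : rep g n :=
  Rep (fun i => B *m ra r i *m invmx B) (fun i => B *m rb r i *m invmx B)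
      (fun j => B *m rc r j *m invmx B).

(* rho is a representative of a point of S_g(t_1..t_n) *)
Definition in_S g n (t : 'I_n -> M3) (r : rep g n) : Prop :=
  is_hom r /\ forall i, conjG (rc r i) (t i).

Definition in_V g n (t : 'I_n -> M3) (l : 'I_n) (r : rep g n) : Prop :=
  in_S t r /\ rc r l = t l.

(* [rho] lies in the zero locus of the section s^l_{j,k}(c_q): for a
   representative rho' in V^l of the class of rho and A in SU(3) with
   A rho'(c_q) A^{-1} = t_q, the entry A_{jk} vanishes. *)
Definition in_zero_locus g n (t : 'I_n -> M3) (l q : 'I_n) (j k : 'I_3)
    (r : rep g n) : Prop :=
  exists B, isSU3 B /\ in_V t l (conj_rep B r) /\
    exists A, isSU3 A /\ A *m rc (conj_rep B r) q *m invmx A = t q /\ A j k = 0.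

From mathcomp Require Import all_boot all_algebra.
From mathcomp Require Import complex Rstruct.
(* An admissible pair (B, A) in the definition of s^l_{j,k}(c_q) is unique up to
   A |-> P A Q with P, Q in the torus, because the centralizers of t_q and t_l are
   exactly T; such a change only rescales the entries of A, so [rho] lies in the
   zero locus iff the entry of any one admissible A vanishes.  For a unitary A,
   row i and column i both have unit norm and share the entry A_ii, hence
   |A_ij|^2 + |A_ik|^2 = |A_ji|^2 + |A_ki|^2, and one side vanishes iff the
   other does. *)

Set Implicit Arguments. Unset Strict Implicit. Unset Printing Implicit Defensive.
Import GRing.Theory Num.Theory.
Local Open Scope ring_scope.

Lemma mulmx_diag_entry (R : pzRingType) m (P M Q : 'M[R]_m) a b :
  is_diag_mx P -> is_diag_mx Q -> (P *m M *m Q) a b = P a a * M a b * Q b b.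
Proof.
case/diag_mxP=> d -> /diag_mxP[e ->].
by rewrite mul_mx_diag mul_diag_mx !mxE !eqxx !mulr1n.
Qed.

Lemma conjmx_intertwine (R : comUnitRingType) m (B x t : 'M[R]_m) :
  B \in unitmx -> B *m x *m invmx B = t -> B *m x = t *m B.
Proof. by move=> uB <-; rewrite mulmxKV. Qed.

Lemma conjmx_intertwine_mul (R : comUnitRingType) m (A B x t : 'M[R]_m) :
  B \in unitmx -> A *m (B *m x *m invmx B) = t *m A ->
  (A *m B) *m x = t *m (A *m B).
Proof.
move=> uB h.
by rewrite -mulmxA -[B *m x](mulmxKV uB) mulmxA h mulmxA.
Qed.

Lemma intertwiners_commute (R : comUnitRingType) m (X Y x t : 'M[R]_m) :
  X \in unitmx -> X *m x = t *m X -> Y *m x = t *m Y ->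
  (Y *m invmx X) *m t = t *m (Y *m invmx X).
Proof.
move=> uX hX hY.
have tE : t = X *m x *m invmx X by rewrite hX mulmxK.
by rewrite {1}tE !mulmxA mulmxKV // hY.
Qed.

Lemma adjmM (A B : M3) : adjm (A *m B) = adjm B *m adjm A.
Proof. by rewrite /adjm map_mxM trmx_mul. Qed.

Lemma adjmK (A : M3) : adjm (adjm A) = A.
Proof. by apply/matrixP => a b; rewrite !mxE conjcK. Qed.

Lemma SU3_unitmx A : isSU3 A -> A \in unitmx.
Proof. by case=> _ detA; rewrite unitmxE detA unitr1. Qed.

Lemma SU3_invmx A : isSU3 A -> invmx A = adjm A.
Proof.
move=> SU3A; have uA := SU3_unitmx SU3A; case: SU3A => AA _.
by rewrite -[adjm A]mul1mx -(mulVmx uA) -mulmxA AA mulmx1.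
Qed.

Lemma SU3_mul A B : isSU3 A -> isSU3 B -> isSU3 (A *m B).
Proof.
move=> [AA detA] [BB detB]; split; last by rewrite det_mulmx detA detB mulr1.
by rewrite adjmM mulmxA -(mulmxA A) BB mulmx1 AA.
Qed.

Lemma SU3_inv A : isSU3 A -> isSU3 (invmx A).
Proof.
move=> SU3A; split; last by rewrite det_inv; case: SU3A => _ ->; rewrite invr1.
by rewrite SU3_invmx // adjmK; apply: mulmx1C; case: SU3A.
Qed.

Lemma in_torus_diag P : in_torus P -> is_diag_mx P.
Proof. by case=> _ offdiagP; apply/is_diag_mxP => a b ab; apply: offdiagP. Qed.

Section UnitaryNorms.
Variables (m : nat) (A : 'M[CC]_m).
Hypothesis A_unitary : A *m (map_mx conjc A)^T = 1%:M.

Lemma unitary_row_norm i : \sum_c `|A i c| ^+ 2 = 1.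
Proof.
have := congr1 (fun M : 'M_m => M i i) A_unitary; rewrite !mxE eqxx => Aii.
by apply: etrans Aii; apply: eq_bigr => c _; rewrite !mxE sqr_normc.
Qed.

Lemma unitary_col_norm i : \sum_c `|A c i| ^+ 2 = 1.
Proof.
have := congr1 (fun M : 'M_m => M i i) (mulmx1C A_unitary).
rewrite !mxE eqxx => Aii.
by apply: etrans Aii; apply: eq_bigr => c _; rewrite !mxE sqr_normc mulrC.
Qed.

Lemma unitary_offdiag_row_col_norm i :
  \sum_(c | c != i) `|A i c| ^+ 2 = \sum_(c | c != i) `|A c i| ^+ 2.
Proof.
have := unitary_row_norm i; rewrite (bigD1 i) //= -(unitary_col_norm i).
by rewrite [in RHS](bigD1 i) //= => /addrI.
Qed.

End UnitaryNorms.

Lemma ord3_cases (i j k : 'I_3) : i != j -> j != k -> i != k ->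
  forall c, [|| c == i, c == j | c == k].
Proof.
by case: i j k => [[|[|[|?]]] ?] [[|[|[|?]]] ?] [[|[|[|?]]] ?] ? ? ? [[|[|[|?]]] ?].
Qed.

Lemma sum_ord3_neq (V : nmodType) (f : 'I_3 -> V) (i j k : 'I_3) :
  i != j -> j != k -> i != k -> \sum_(c | c != i) f c = f j + f k.
Proof.
move=> ij jk ik; rewrite (bigD1 j) 1?eq_sym //= (bigD1 k) /=; last first.
  by rewrite eq_sym ik eq_sym jk.
rewrite addrA big1 ?addr0 // => c /andP[/andP[ci cj] ck].
by have := ord3_cases ij jk ik c; rewrite (negPf ci) (negPf cj) (negPf ck).
Qed.

Lemma sqr_norm_add_eq0 (x y : CC) :
  (x = 0 /\ y = 0) <-> `|x| ^+ 2 + `|y| ^+ 2 = 0.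
Proof.
split=> [[-> ->]|/eqP]; first by rewrite normr0 expr0n addr0.
rewrite paddr_eq0 ?exprn_ge0 // !sqrf_eq0 !normr_eq0.
by case/andP=> /eqP-> /eqP->.
Qed.

Lemma unitary3_row_col_eq0 (A : M3) (i j k : 'I_3) :
  i != j -> j != k -> i != k -> A *m adjm A = 1%:M ->
  (A i j = 0 /\ A i k = 0) <-> (A j i = 0 /\ A k i = 0).
Proof.
move=> ij jk ik /unitary_offdiag_row_col_norm/(_ i).
by rewrite !(sum_ord3_neq _ ij jk ik) !sqr_norm_add_eq0 => ->.
Qed.

Section ZeroLocus.
Variables (g n : nat) (t : 'I_n -> M3) (l q : 'I_n) (r : rep g n).
Hypothesis centralizers : forall i, centralizer_is_T (t i).

Definition adapted_pair (B A : M3) : Prop :=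
  isSU3 B /\ in_V t l (conj_rep B r) /\
  isSU3 A /\ A *m rc (conj_rep B r) q *m invmx A = t q.

Lemma adapted_pair_torus_equiv B1 A1 B2 A2 :
  adapted_pair B1 A1 -> adapted_pair B2 A2 ->
  exists P Q, [/\ in_torus P, in_torus Q & A1 = P *m A2 *m Q].
Proof.
move=> [SU3B1 [[_ /= tl1] [SU3A1 /= tq1]]] [SU3B2 [[_ /= tl2] [SU3A2 /= tq2]]].
have [uB1 uA1] := (SU3_unitmx SU3B1, SU3_unitmx SU3A1).
have [uB2 uA2] := (SU3_unitmx SU3B2, SU3_unitmx SU3A2).
have uAB2 : A2 *m B2 \in unitmx by rewrite unitmx_mul uA2.
move/(conjmx_intertwine uB1): tl1 => tl1; move/(conjmx_intertwine uB2): tl2 => tl2.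
move/(conjmx_intertwine uA1)/(conjmx_intertwine_mul uB1): tq1 => tq1.
move/(conjmx_intertwine uA2)/(conjmx_intertwine_mul uB2): tq2 => tq2.
pose P := (A1 *m B1) *m invmx (A2 *m B2); pose Q := B2 *m invmx B1.
have SU3P : isSU3 P by apply: SU3_mul (SU3_mul _ _) (SU3_inv (SU3_mul _ _)).
have SU3Q : isSU3 Q by apply: SU3_mul (SU3_inv _).
exists P, Q; split.
- by apply: (@centralizers q P SU3P).1; apply: intertwiners_commute tq2 tq1.
- by apply: (@centralizers l Q SU3Q).1; apply: intertwiners_commute tl1 tl2.
- by rewrite /P /Q mulmxA -(mulmxA _ A2) mulmxKV // mulmxK.
Qed.

Lemma zero_locus_adapted_entry B A a b : adapted_pair B A ->
  in_zero_locus t l q a b r <-> A a b = 0.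
Proof.
move=> BA; split=> [[B' [SU3B' [VB' [A' [SU3A' [tq' A'ab]]]]]] | Aab].
- have BA' : adapted_pair B' A' by [].
  have [P [Q [torP torQ ->]]] := adapted_pair_torus_equiv BA BA'.
  by rewrite mulmx_diag_entry ?in_torus_diag // A'ab mulr0 mul0r.
- by case: BA => [SU3B [VB [SU3A tq]]]; exists B; do !split=> //; exists A.
Qed.

Lemma zero_locus_adapted_pair a b : in_zero_locus t l q a b r ->
  exists B A, adapted_pair B A.
Proof. by case=> [B [SU3B [VB [A [SU3A [tq _]]]]]]; exists B, A. Qed.

End ZeroLocus.

Theorem lemma2p5 (g n : nat) (t : 'I_n -> M3) :
  (2 <= g)%N -> (2 <= n)%N ->
  (forall i, in_torus (t i)) -> generic t ->
  forall (l q : 'I_n), l != q ->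
  forall (i j k : 'I_3), i != j -> j != k -> i != k ->
  forall r : rep g n, in_S t r ->
    (in_zero_locus t l q i j r /\ in_zero_locus t l q i k r) <->
    (in_zero_locus t l q j i r /\ in_zero_locus t l q k i r).
Proof.
move=> _ _ _ [centralizers _] l q _ i j k ij jk ik r _.
have row_col B A : adapted_pair t l q r B A ->
    (in_zero_locus t l q i j r /\ in_zero_locus t l q i k r) <->
    (in_zero_locus t l q j i r /\ in_zero_locus t l q k i r).
  move=> BA; rewrite !(zero_locus_adapted_entry centralizers _ _ BA).
  by apply: unitary3_row_col_eq0 => //; case: BA => _ [_ [[]]].
split=> H; have [B [A BA]] := zero_locus_adapted_pair H.1.
- exact: (row_col _ _ BA).1.
- exact: (row_col _ _ BA).2.
Qed.
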